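(* Let $n\geqslant 3$ and let $P$, $P'$ be $n$-gonal suspensions in $\mathbb{R}^3$ with a fixed combinatorial equivalence between them, vertices labelled $x_0,x_1,\dots,x_n,x_{n+1}$ and $x'_0,\dots,x'_{n+1}$ as described in the context (corresponding vertices having corresponding labels). For $j=1,\dots,n$ write $j^+=j+1$ if $j<n$ and $n^+=1$, and let $\ell(a,b)$, $\ell'(a',b')$ denote lengths of edges of $P$, $P'$ (equivalently, the lengths of the corresponding sides in natural developments of $P$, $P'$). Define the polynomials $$q_j(t)=\det\begin{pmatrix}0&1&1&1&1\\1&0&\ell(x_0,x_j)^2&\ell(x_0,x_{j^+})^2&t^2\\1&\ell(x_0,x_j)^2&0&\ell(x_j,x_{j^+})^2&\ell(x_j,x_{n+1})^2\\1&\ell(x_0,x_{j^+})^2&\ell(x_j,x_{j^+})^2&0&\ell(x_{j^+},x_{n+1})^2\\1&t^2&\ell(x_j,x_{n+1})^2&\ell(x_{j^+},x_{n+1})^2&0\end{pmatrix},$$ $j=1,\dots,n$, and define $q'_j(t')$ by the same formula with $x_i,\ell,t$ replaced by $x'_i,\ell',t'$. Suppose that the system of $n$ algebraic equations $q'_j(t')=\delta\, q_j(t)$, $j=1,\dots,n$, in the three unknowns $\delta,t,t'$ has no real solution with $\delta>0$, $t>0$, $t'>0$. Then $P$ and $P'$ are not affine-equivalent.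
   Context: A polyhedron is a connected two-dimensional polyhedral surface in $\mathbb{R}^3$ composed of finitely many convex polygons (faces); it need not be convex and may self-intersect. An $n$-gonal suspension is a polyhedron combinatorially equivalent to a regular $n$-gonal bipyramid: it has vertices $x_0$ (south pole), $x_{n+1}$ (north pole) and equator vertices $x_1,\dots,x_n$ in cyclic order; its edges are $x_jx_{j^+}$, $x_0x_j$, $x_{n+1}x_j$ ($j=1,\dots,n$), and its faces are the triangles $x_0x_jx_{j^+}$ and $x_{n+1}x_jx_{j^+}$; $x_0$ and $x_{n+1}$ are not joined by an edge. Two combinatorially equivalent polyhedra are affine-equivalent if a nondegenerate affine map $\mathbb{R}^3\to\mathbb{R}^3$ carries the first onto the second and each vertex, edge and face to the corresponding one. *)

From HB Require Import structures.
From mathcomp Require Import all_boot all_order all_algebra.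
From mathcomp Require Import reals.
Set Implicit Arguments. Unset Strict Implicit. Unset Printing Implicit Defensive.
Import Order.TTheory GRing.Theory Num.Theory.
Local Open Scope ring_scope.

Section Defs.
Variable R : realType.

Definition sqdist (u v : 'rV[R]_3) : R := \sum_(i < 3) (u ord0 i - v ord0 i) ^+ 2.

Definition noncollinear (a b c : 'rV[R]_3) : Prop :=
  \rank (col_mx (b - a) (c - a)) = 2%N.

Definition succ_eq (n j : nat) : nat := if (j < n)%N then j.+1 else 1%N.

(* An n-gonal suspension, given by its labelled vertices x 0 (south pole),
   x 1 .. x n (equator, cyclic order), x (n+1) (north pole).  Its edges and
   faces are determined combinatorially by the labels; geometrically we require
   distinct vertices and non-degenerate triangular faces. *)
Definition suspension (n : nat) (x : nat -> 'rV[R]_3) : Prop :=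
  (3 <= n)%N /\
  (forall i k, (i <= n.+1)%N -> (k <= n.+1)%N -> i <> k -> x i <> x k) /\
  (forall j, (leq 1 j && leq j n) ->
     noncollinear (x 0%N) (x j) (x (succ_eq n j)) /\
     noncollinear (x n.+1) (x j) (x (succ_eq n j))).

(* affine equivalence respecting the labelling (a nondegenerate affine map
   sending each vertex to the corresponding one; it then sends edges and faces
   to the corresponding ones) *)
Definition affine_equiv (n : nat) (x x' : nat -> 'rV[R]_3) : Prop :=
  exists (A : 'M[R]_3) (b : 'rV[R]_3),
    A \in unitmx /\ forall i, (i <= n.+1)%N -> x' i = x i *m A + b.

Definition CM5 (a b c d e f : R) : 'M[R]_5 :=
  \matrix_(i < 5, k < 5)
    nth 0 (nth [::] [:: [:: 0; 1; 1; 1; 1];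
                       [:: 1; 0; a; b; c];
                       [:: 1; a; 0; d; e];
                       [:: 1; b; d; 0; f];
                       [:: 1; c; e; f; 0]] i) k.

Definition susp_q (n : nat) (x : nat -> 'rV[R]_3) (j : nat) (t : R) : R :=
  let jp := succ_eq n j in
  \det (CM5 (sqdist (x 0%N) (x j)) (sqdist (x 0%N) (x jp)) (t ^+ 2)
            (sqdist (x j) (x jp)) (sqdist (x j) (x n.+1)) (sqdist (x jp) (x n.+1))).

End Defs.

(* Take t and t' to be the distances between the poles.  Then q_j(t) is the
   Cayley-Menger determinant of the tetrahedron x_0 x_j x_j+ x_(n+1), which
   factors as a constant times det(W)^2, W being the matrix of homogeneous
   coordinates (1, x_i) of its vertices.  An affine map x |-> x A + b multiplies
   W on the right by a block-triangular matrix of determinant det A, so all the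
   q'_j(t') equal det(A)^2 q_j(t), and delta = det(A)^2 solves the system. *)

From HB Require Import structures.
From mathcomp Require Import all_boot all_order all_algebra.
From mathcomp Require Import reals ring.
Import Order.TTheory GRing.Theory Num.Theory.
Set Implicit Arguments. Unset Strict Implicit. Unset Printing Implicit Defensive.
Local Open Scope ring_scope.

Section CayleyMenger.
Variable R : comPzRingType.

Definition hom_mx m d (p : 'I_m -> 'rV[R]_d) : 'M[R]_(m, 1 + d) :=
  \matrix_(i < m) row_mx 1%:M (p i).

Lemma hom_mxE m d (p : 'I_m -> 'rV[R]_d) :
  hom_mx p = row_mx (const_mx 1) (\matrix_(i < m) p i).
Proof.
apply/row_matrixP => i; rewrite rowK row_row_mx rowK.
by congr row_mx; apply/rowP => k; rewrite (ord1 k) !mxE.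
Qed.

Lemma hom_mx_affine m d (p : 'I_m -> 'rV[R]_d) (A : 'M_d) (b : 'rV_d) :
  hom_mx (fun i => p i *m A + b) = hom_mx p *m block_mx 1%:M b 0 A.
Proof.
apply/row_matrixP => i; rewrite row_mul !rowK mul_row_block.
by rewrite !mul1mx mulmx0 addr0 addrC.
Qed.

Lemma det_hom_mx_affine d (p : 'I_(1 + d) -> 'rV[R]_d) (A : 'M_d) (b : 'rV_d) :
  \det (hom_mx (fun i => p i *m A + b)) = \det (hom_mx p) * \det A.
Proof. by rewrite hom_mx_affine det_mulmx det_ublock det1 mul1r. Qed.

Definition sqnorm d (v : 'rV[R]_d) : R := (v *m v^T) 0 0.

Lemma sqnormB d (u v : 'rV[R]_d) :
  sqnorm (u - v) = sqnorm u + sqnorm v - 2 * (u *m v^T) 0 0.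
Proof.
rewrite /sqnorm linearB /= !mulmxBl !mulmxBr !mxE.
rewrite [\sum_j v 0 j * _](eq_bigr (fun j => u 0 j * v^T j 0)) => [|j _].
  by ring.
by rewrite !mxE mulrC.
Qed.

Definition cm_mx m d (p : 'I_m -> 'rV[R]_d) : 'M[R]_(1 + m) :=
  block_mx 0 (const_mx 1) (const_mx 1) (\matrix_(i, k) sqnorm (p i - p k)).

Lemma eq_cm_mx m d (p p' : 'I_m -> 'rV[R]_d) : p =1 p' -> cm_mx p = cm_mx p'.
Proof. by move=> eq_p; congr block_mx; apply/matrixP => i k; rewrite !mxE !eq_p. Qed.

(* The Cayley-Menger matrix is the Gram matrix of the vectors (1, 0, 0) and
   (|p_i|^2, 1, p_i) for the bilinear form x y' + y x' - 2 z.z' on R x R x R^d. *)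
Definition cm_lift m d (p : 'I_m -> 'rV[R]_d) : 'M[R]_(1 + m, 1 + (1 + d)) :=
  block_mx 1%:M 0 (\col_i sqnorm (p i)) (hom_mx p).

Definition cm_form d : 'M[R]_(1 + (1 + d)) :=
  block_mx 0 (row_mx 1%:M 0) (col_mx 1%:M 0) (block_mx 0 0 0 (-2)%:M).

Lemma cm_mx_factor m d (p : 'I_m -> 'rV[R]_d) :
  cm_mx p = cm_lift p *m cm_form d *m (cm_lift p)^T.
Proof.
rewrite /cm_lift /cm_form hom_mxE !tr_block_mx !mulmx_block tr_row_mx.
rewrite !trmx0 trmx1 !mulmx0 !mul0mx !mulmx1 !addr0 !add0r !mul_row_col.
rewrite !mul0mx !mulmx0 !mul1mx !mulmx1 !addr0 !add0r row_mx0 !mul_mx_row.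
rewrite !mulmx1 !mulmx0 add0r add_row_mx addr0 add0r !mul_row_col.
rewrite mul1mx mul0mx addr0 trmx_const mul_mx_scalar.
rewrite /cm_mx; congr block_mx; apply/matrixP => i k.
rewrite [LHS]mxE sqnormB !mxE !big_ord1 !mxE.
under [in LHS]eq_bigr do rewrite mxE.
under [in RHS]eq_bigr do rewrite !mxE -mulrA.
by rewrite -mulr_sumr; ring.
Qed.

Lemma det_cm_mx_affine d (p : 'I_(1 + d) -> 'rV[R]_d) (A : 'M_d) (b : 'rV_d) :
  \det (cm_mx (fun i => p i *m A + b)) = \det A ^+ 2 * \det (cm_mx p).
Proof.
rewrite !cm_mx_factor !det_mulmx !det_tr !det_lblock det1 !mul1r.
by rewrite det_hom_mx_affine; ring.
Qed.

End CayleyMenger.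

Section Suspension.
Variable R : realType.
Implicit Types (u v p q r s : 'rV[R]_3).

Lemma sqdistE u v : sqdist u v = sqnorm (u - v).
Proof. by rewrite /sqnorm mxE; apply: eq_bigr => i _; rewrite !mxE expr2. Qed.

Lemma sqdist_ge0 u v : 0 <= sqdist u v.
Proof. by apply: sumr_ge0 => i _; apply: sqr_ge0. Qed.

Lemma sqdist_eq0 u v : (sqdist u v == 0) = (u == v).
Proof.
apply/eqP/eqP => [uv0 | ->]; last by apply: big1 => i _; rewrite subrr expr0n.
apply/rowP => i; apply/eqP; rewrite -subr_eq0 -sqrf_eq0; apply/eqP.
by apply: (psumr_eq0P _ uv0) => // k _; apply: sqr_ge0.
Qed.

Lemma sqdistC u v : sqdist u v = sqdist v u.
Proof. by apply: eq_bigr => i _; rewrite -sqrrN opprB. Qed.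

Lemma sqdistxx u : sqdist u u = 0.
Proof. by apply/eqP; rewrite sqdist_eq0. Qed.

Lemma sqdist_gt0 u v : (0 < sqdist u v) = (u != v).
Proof. by rewrite lt_def sqdist_ge0 andbT sqdist_eq0. Qed.

Definition tetra p q r s (i : 'I_4) : 'rV[R]_3 := nth p [:: p; q; r; s] i.

Lemma cm_mx_tetra p q r s : cm_mx (tetra p q r s) =
  CM5 (sqdist p q) (sqdist p r) (sqdist p s) (sqdist q r) (sqdist q s) (sqdist r s).
Proof.
apply/matrixP => i0 k0; rewrite /cm_mx.
case: (@split_ordP 1 4 i0) => i ->; case: (@split_ordP 1 4 k0) => k ->.
all: rewrite ?block_mxEul ?block_mxEur ?block_mxEdl ?block_mxEdr !mxE.
- by rewrite (ord1 i) (ord1 k).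
- by rewrite (ord1 i); case: k => [[|[|[|[|k]]]] ?].
- by rewrite (ord1 k); case: i => [[|[|[|[|i]]]] ?].
rewrite -sqdistE.
by case: i => [[|[|[|[|i]]]] ?]; case: k => [[|[|[|[|k]]]] ?];
  rewrite //= ?sqdistxx // sqdistC.
Qed.

Lemma susp_q_pole_distance n (x : nat -> 'rV[R]_3) j :
  susp_q n x j (Num.sqrt (sqdist (x 0%N) (x n.+1))) =
  \det (cm_mx (tetra (x 0%N) (x j) (x (succ_eq n j)) (x n.+1))).
Proof. by rewrite /susp_q /= sqr_sqrtr ?sqdist_ge0 // cm_mx_tetra. Qed.

End Suspension.

Lemma succ_eq_le n j : (0 < n)%N -> (succ_eq n j <= n)%N.
Proof. by move=> n_gt0; rewrite /succ_eq; case: ifP. Qed.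

Theorem theorem7 (R : realType) (n : nat) (x x' : nat -> 'rV[R]_3) :
  (3 <= n)%N ->
  suspension n x -> suspension n x' ->
  ~ (exists delta t t' : R, 0 < delta /\ 0 < t /\ 0 < t' /\
       forall j, (leq 1 j && leq j n) -> susp_q n x' j t' = delta * susp_q n x j t) ->
  ~ affine_equiv n x x'.
Proof.
move=> n_ge3 [_ [x_inj _]] [_ [x'_inj _]] no_solution [A [b [A_unit x'E]]].
apply: no_solution.
have x_poles : x 0%N != x n.+1 by apply/eqP; apply: x_inj.
have x'_poles : x' 0%N != x' n.+1 by apply/eqP; apply: x'_inj.
exists (\det A ^+ 2), (Num.sqrt (sqdist (x 0%N) (x n.+1))),
  (Num.sqrt (sqdist (x' 0%N) (x' n.+1))).
split; first by rewrite exprn_even_gt0 //= -unitfE -unitmxE.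
split; first by rewrite sqrtr_gt0 sqdist_gt0.
split; first by rewrite sqrtr_gt0 sqdist_gt0.
move=> j /andP [_ j_le_n]; rewrite !susp_q_pole_distance -(det_cm_mx_affine _ A b).
have succ_le : (succ_eq n j <= n.+1)%N by apply/leqW/succ_eq_le/(leq_trans _ n_ge3).
congr (\det _); apply: eq_cm_mx => -[[|[|[|[|i]]]] ?].
all: by rewrite /tetra /= x'E // leqW.
Qed.
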